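(* Let $E\subseteq L$ be finite. If $E\models\bot$ then $\vec{\mathcal U}^E$ is empty, while if $E\not\models\bot$ then $\vec{\mathcal U}^E$ is full (so in either case $\vec{\mathcal U}^E\in\Upsilon$). In both cases $\preceq_E=\preceq_{\vec{\mathcal U}^E}$. Hence $\preceq_E$ is an E-relation.
   Context: $L$ is a propositional language built from a finite set of propositional variables with the connectives $\neg,\wedge,\vee,\rightarrow,\top,\bot$; $W$ is the finite set of propositional worlds. For $\theta\in L$, $S_\theta=\{w\in W\mid w\models\theta\}$; for $E\cup\{\phi\}\subseteq L$, $E\models\phi$ means $\bigcap_{\theta\in E}S_\theta\subseteq S_\phi$; $\models\phi$ means $\emptyset\models\phi$; a set $E$ is consistent iff $E\not\models\bot$. For $w\in W$, $\mathrm{sent}_E(w)=\{\theta\in E\mid w\models\theta\}$. Sequences: finite sequences $\vec{\mathcal U}=(\mathcal U_0,\ldots,\mathcal U_k)$ of mutually disjoint subsets of $W$ (components may be empty, possibly repeatedly). $\mathrm{rank}^{\vec{\mathcal U}}(\theta)$ is the least $i$ with $\mathcal U_i\cap S_\theta\neq\emptyset$, $\infty$ if none ($i<\infty$ for all integers $i$). $\theta\mid\!\sim_{\vec{\mathcal U}}\phi$ iff $\mathrm{rank}^{\vec{\mathcal U}}(\theta)<\mathrm{rank}^{\vec{\mathcal U}}(\theta\wedge\neg\phi)$ or $\mathrm{rank}^{\vec{\mathcal U}}(\theta)=\infty$. $\vec{\mathcal U}$ is full iff $\bigcup_i\mathcal U_i=W$, empty iff $\bigcup_i\mathcal U_i=\emptyset$;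 $\Upsilon$ is the set of sequences which are full or empty. For $\vec{\mathcal U}\in\Upsilon$, $\theta\preceq_{\vec{\mathcal U}}\phi$ iff (not $\neg\theta\vee\neg\phi\mid\!\sim_{\vec{\mathcal U}}\theta$) or $\neg\phi\mid\!\sim_{\vec{\mathcal U}}\bot$. E-relation: a relation $\preceq\subseteq L\times L$ such that for all $\theta,\phi,\psi$: (E1) $\theta\preceq\phi$ and $\phi\preceq\psi$ imply $\theta\preceq\psi$; (E2) $\theta\models\phi$ implies $\theta\preceq\phi$; (E3) $\theta\preceq\theta\wedge\phi$ or $\phi\preceq\theta\wedge\phi$; (E4) if $\bot\prec\psi$ for some $\psi$, then $\theta\preceq\phi$ for all $\theta$ implies $\models\phi$; here $\prec$ is the strict part of $\preceq$. Relation generated by a set: for $E\subseteq L$, define $\theta\prec_E\phi$ iff $E\not\models\bot$, $\not\models\theta$, and for every $E'\subseteq E$ such that $E'\cup\{\neg\phi\}$ is consistent there exists $E''\subseteq E$ with $|E'|<|E''|$ and $E''\cup\{\neg\theta\}$ consistent. The relation $\preceq_E$ is the relation with strict part $\prec_E$, i.e. $\theta\preceq_E\phi$ iff not $\phi\prec_E\theta$. For finite $E$ with $|E|=k$, set for $i=0,\ldots,k$: $\mathcal U^E_i=\{w\in W\mid |\mathrm{sent}_E(w)|=k-i\}$ if $E\not\models\bot$, and $\mathcal U^E_i=\emptyset$ otherwise; $\vec{\mathcal U}^E=(\mathcal U^E_0,\ldots,\mathcal U^E_k)$. *)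

From HB Require Import structures.
From mathcomp Require Import all_boot all_order.
From mathcomp Require Import finmap.
Set Implicit Arguments. Unset Strict Implicit. Unset Printing Implicit Defensive.

Inductive form (V : Type) : Type :=
| Var of V
| Neg of form V
| And of form V & form V
| Or  of form V & form V
| Imp of form V & form V
| Top
| Bot.
Arguments Top {V}. Arguments Bot {V}.

Section FormCount.
Variable V : countType.
Fixpoint form_enc (f : form V) : GenTree.tree V :=
  match f with
  | Var v => GenTree.Leaf v
  | Neg a => GenTree.Node 0 [:: form_enc a]
  | And a b => GenTree.Node 1 [:: form_enc a; form_enc b]
  | Or a b => GenTree.Node 2 [:: form_enc a; form_enc b]
  | Imp a b => GenTree.Node 3 [:: form_enc a; form_enc b]
  | Top => GenTree.Node 4 [::]
  | Bot => GenTree.Node 5 [::]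
  end.
Fixpoint form_dec (t : GenTree.tree V) : option (form V) :=
  match t with
  | GenTree.Leaf v => Some (Var v)
  | GenTree.Node 0 [:: a] => omap (@Neg V) (form_dec a)
  | GenTree.Node 1 [:: a; b] =>
      if (form_dec a, form_dec b) is (Some x, Some y) then Some (And x y) else None
  | GenTree.Node 2 [:: a; b] =>
      if (form_dec a, form_dec b) is (Some x, Some y) then Some (Or x y) else None
  | GenTree.Node 3 [:: a; b] =>
      if (form_dec a, form_dec b) is (Some x, Some y) then Some (Imp x y) else None
  | GenTree.Node 4 [::] => Some Top
  | GenTree.Node 5 [::] => Some Bot
  | _ => None
  end.
Lemma form_encK : pcancel form_enc form_dec.
Proof. by elim=> //= [? -> | ? -> ? -> | ? -> ? -> | ? -> ? ->]. Qed.
HB.instance Definition _ := Countable.copy (form V) (pcan_type form_encK).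
End FormCount.

Section Semantics.
Variable V : finType.

(* worlds: all truth assignments to the variables; W is the whole finite type *)
Definition world := {ffun V -> bool}.

Fixpoint sat (w : world) (f : form V) : bool :=
  match f with
  | Var v => w v
  | Neg a => ~~ sat w a
  | And a b => sat w a && sat w b
  | Or a b => sat w a || sat w b
  | Imp a b => sat w a ==> sat w b
  | Top => true
  | Bot => false
  end.

Definition S (t : form V) : {set world} := [set w | sat w t].

Definition ent (E : {fset form V}) (p : form V) : bool :=
  (\bigcap_(t <- E) S t) \subset S p.

Definition valid (p : form V) : bool := ent fset0%fset p.

Definition consistent (E : {fset form V}) : bool := ~~ ent E Bot.

Definition sent (E : {fset form V}) (w : world) : {fset form V} :=
  [fset t in E | sat w t]%fset.

(* Sequences of subsets of W. Ranks: None stands for infinity. *)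
Definition rank (U : seq {set world}) (t : form V) : option nat :=
  let p := fun A : {set world} => [exists w, (w \in A) && (w \in S t)] in
  if has p U then Some (find p U) else None.

Definition rank_lt (a b : option nat) : bool :=
  match a, b with
  | Some i, Some j => i < j
  | Some _, None => true
  | None, _ => false
  end.

Definition nmsim (U : seq {set world}) (t p : form V) : Prop :=
  rank_lt (rank U t) (rank U (And t (Neg p))) \/ rank U t = None.

Definition is_sequence (U : seq {set world}) : Prop :=
  forall i j, i < size U -> j < size U -> i != j ->
    [disjoint nth set0 U i & nth set0 U j].

Definition is_full (U : seq {set world}) : Prop :=
  \bigcup_(A <- U) A = [set: world].
Definition is_empty (U : seq {set world}) : Prop :=
  \bigcup_(A <- U) A = set0.

Definition Upsilon (U : seq {set world}) : Prop :=
  is_sequence U /\ (is_full U \/ is_empty U).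

Definition preceq_U (U : seq {set world}) (t p : form V) : Prop :=
  ~ nmsim U (Or (Neg t) (Neg p)) t \/ nmsim U (Neg p) Bot.

Definition strict (R : form V -> form V -> Prop) (t p : form V) : Prop :=
  R t p /\ ~ R p t.

Definition E_relation (R : form V -> form V -> Prop) : Prop :=
  [/\ (forall t p q, R t p -> R p q -> R t q),
      (forall t p, ent [fset t]%fset p -> R t p),
      (forall t p, R t (And t p) \/ R p (And t p)) &
      ((exists q, strict R Bot q) -> forall p, (forall t, R t p) -> valid p)].

Definition prec_E (E : {fset form V}) (t p : form V) : Prop :=
  [/\ consistent E, ~~ valid t &
      forall E' : {fset form V}, (E' `<=` E)%fset -> consistent (E' `|` [fset Neg p])%fset ->
        exists2 E'' : {fset form V}, (E'' `<=` E)%fset &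
          (#|` E'| < #|` E''|) && consistent (E'' `|` [fset Neg t])%fset].

Definition preceq_E (E : {fset form V}) (t p : form V) : Prop := ~ prec_E E p t.

Definition UE_comp (E : {fset form V}) (i : nat) : {set world} :=
  if consistent E then [set w | #|` sent E w| == #|` E| - i] else set0.

Definition UE (E : {fset form V}) : seq {set world} :=
  mkseq (UE_comp E) (#|` E|).+1.

End Semantics.

From HB Require Import structures.
From mathcomp Require Import all_boot all_order finmap zify.
Local Open Scope fset_scope.
Set Implicit Arguments. Unset Strict Implicit.

(* Everything is governed by the plausibility of a set A of worlds: one more
   than the largest number of members of E true in a world of A, and 0 when A
   is empty.  A subset E' of E is consistent with ~ p exactly when E' is
   contained in sent_E(w) for some world w of S_(~ p), so t <_E p says that
   ~ t is strictly more plausible than ~ p.  The component of U^E containing a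
   world w has index |E| - |sent_E(w)|, so ranks in U^E are plausibilities
   read backwards, and <=_(U^E) compares the same two numbers.  The E-relation
   axioms then come from the monotonicity of plausibility and its behaviour on
   unions. *)

Lemma setI_neq0E (T : finType) (A B : {set T}) :
  (A :&: B != set0) = [exists x, (x \in A) && (x \in B)].
Proof. by apply/set0Pn/existsP => -[x Hx]; exists x; rewrite in_setI in Hx *. Qed.

Section Semantics.
Variable V : finType.
Implicit Types (t p q : form V) (A : {fset form V}) (w : world V).

Lemma S_Neg t : S (Neg t) = ~: S t.
Proof. by apply/setP => w; rewrite !inE. Qed.

Lemma S_And t p : S (And t p) = S t :&: S p.
Proof. by apply/setP => w; rewrite !inE. Qed.

Lemma S_Or t p : S (Or t p) = S t :|: S p.
Proof. by apply/setP => w; rewrite !inE. Qed.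

Lemma mem_bigcap_S (s : seq (form V)) w :
  (w \in \bigcap_(t <- s) S t) = all (sat w) s.
Proof.
elim: s => [|a s IH]; first by rewrite big_nil inE.
by rewrite big_cons in_setI IH inE.
Qed.

Lemma consistentE A : consistent A = [exists w, all (sat w) A].
Proof.
apply/subsetPn/existsP => [[w Hw _] | [w Hw]]; exists w.
- by rewrite -mem_bigcap_S.
- by rewrite mem_bigcap_S.
- by rewrite inE.
Qed.

Lemma consistent_fsetU1 A q :
  consistent (A `|` [fset q]) = [exists w, sat w q && all (sat w) A].
Proof.
rewrite consistentE; apply: eq_existsb => w.
apply/allP/andP => [Hall | [Hq /allP HA] x].
- split; first by apply: Hall; rewrite !inE eqxx orbT.
  by apply/allP => x Hx; apply: Hall; rewrite inE Hx.
- by rewrite !inE => /orP [/HA | /eqP ->].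
Qed.

Lemma validE p : valid p = (S (Neg p) == set0).
Proof.
apply/subsetP/eqP => [H | H w _].
- apply/setP => w; rewrite S_Neg !inE; apply/negbF.
  by have := H w; rewrite mem_bigcap_S inE; apply; apply/allP => x; rewrite inE.
- by apply: contraT => Hw; rewrite -in_setC -S_Neg H inE in Hw.
Qed.

Lemma ent1E t p : ent [fset t] p = (S t \subset S p).
Proof. by rewrite /ent big_seq_fset1. Qed.

Lemma fsubset_sent E A w : (A `<=` sent E w) = (A `<=` E) && all (sat w) A.
Proof.
apply/fsubsetP/andP => [H | [/fsubsetP HE /allP Hw] x Hx].
- by split; [apply/fsubsetP|apply/allP] => x /H; rewrite !inE => /andP [].
- by rewrite !inE HE //= Hw.
Qed.

Lemma consistent_fsetU1_sent E A q : A `<=` E ->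
  consistent (A `|` [fset q]) = [exists w in S q, A `<=` sent E w].
Proof.
move=> sub_A; rewrite consistent_fsetU1; apply: eq_existsb => w.
by rewrite fsubset_sent sub_A inE.
Qed.

Lemma card_sent_le E w : #|` sent E w| <= #|` E|.
Proof. exact/fsubset_leq_card/fset_sub. Qed.

End Semantics.

Definition plausibility (V : finType) (E : {fset form V}) (A : {set world V}) : nat :=
  \max_(w in A) (#|` sent E w|).+1.

Section Plausibility.
Variables (V : finType) (E : {fset form V}).
Implicit Types (A B : {set world V}) (w : world V).
Local Notation pl := (plausibility E).

Lemma plausibility_gt A w : w \in A -> #|` sent E w| < pl A.
Proof. exact: leq_bigmax_cond. Qed.

Lemma plausibility_le A : pl A <= #|` E|.+1.
Proof. by apply/bigmax_leqP => w _; rewrite ltnS card_sent_le. Qed.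

Lemma plausibility_eq0 A : (pl A == 0) = (A == set0).
Proof.
apply/eqP/eqP => [H | ->]; last by rewrite /plausibility big_pred0 // => w; rewrite inE.
by apply/setP => w; rewrite inE; apply: contra_eqF H => /plausibility_gt; case: (pl A).
Qed.

Lemma plausibility_set0 : pl set0 = 0.
Proof. by apply/eqP; rewrite plausibility_eq0. Qed.

Lemma plausibility_witness A n :
  pl A = n.+1 -> exists2 w, w \in A & #|` sent E w| = n.
Proof.
move=> Hn; have /set0Pn [w Hw] : A != set0 by rewrite -plausibility_eq0 Hn.
have [w' Hw' Hmax] := @eq_bigmax_cond _ (mem A) (fun w => (#|` sent E w|).+1)
  (introT card_gt0P (ex_intro _ w Hw)).
by exists w' => //; move: Hn; rewrite /plausibility Hmax => -[].
Qed.

Lemma plausibility_subset A B : A \subset B -> pl A <= pl B.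
Proof. by move=> /subsetP AB; apply/bigmax_leqP => w /AB /plausibility_gt. Qed.

Lemma plausibility_setU A B : pl (A :|: B) = maxn (pl A) (pl B).
Proof.
apply/eqP; rewrite eqn_leq geq_max !plausibility_subset ?subsetUl ?subsetUr ?andbT //.
apply/bigmax_leqP => w; rewrite inE leq_max.
by case/orP => /plausibility_gt ->; rewrite ?orbT.
Qed.

Lemma card_lt_plausibility (A : {fset form V}) B w :
  w \in B -> A `<=` sent E w -> #|` A| < pl B.
Proof.
by move=> Hw /fsubset_leq_card le_A; exact: leq_ltn_trans le_A (plausibility_gt Hw).
Qed.

Lemma prec_EE t p :
  prec_E E t p <-> consistent E && (pl (S (Neg p)) < pl (S (Neg t))).
Proof.
split => [[HE Ht H] | /andP [HE lt_pt]].
  rewrite HE /=; case Hp: (pl (S (Neg p))) => [|n].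
    by rewrite lt0n plausibility_eq0 -validE.
  have [w Hwp Hw] := plausibility_witness Hp.
  have [|E'' sub_E''] := H (sent E w) (fset_sub _ _).
    by rewrite (consistent_fsetU1_sent (E := E)) ?fset_sub //; apply/exists_inP; exists w.
  rewrite (consistent_fsetU1_sent (E := E)) // -Hw.
  move=> /andP [lt_w /exists_inP [w'' Hw'' sub_w'']].
  exact: leq_ltn_trans lt_w (card_lt_plausibility Hw'' sub_w'').
have pl_t_gt0 : 0 < pl (S (Neg t)) by apply: leq_ltn_trans lt_pt.
have [w' Hw't Hw'] := plausibility_witness (esym (prednK pl_t_gt0)).
split => //; first by rewrite validE -plausibility_eq0 -lt0n.
move=> E' sub_E'; rewrite (consistent_fsetU1_sent (E := E)) //.
move=> /exists_inP [w Hwp sub_w].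
exists (sent E w'); first exact: fset_sub.
rewrite (consistent_fsetU1_sent (E := E)) ?fset_sub //; apply/andP; split.
  by have := card_lt_plausibility Hwp sub_w; lia.
by apply/exists_inP; exists w'.
Qed.


Lemma preceq_EE t p :
  preceq_E E t p <-> (consistent E ==> (pl (S (Neg p)) <= pl (S (Neg t)))).
Proof.
rewrite /preceq_E prec_EE; case: (consistent E) => //=.
by rewrite ltnNge; split => [/negP /negPn | ->].
Qed.

Lemma E_relation_preceq_E : E_relation (preceq_E E).
Proof.
split.
- move=> t p q; rewrite !preceq_EE => /implyP Htp /implyP Hpq.
  by apply/implyP => HE; exact: leq_trans (Hpq HE) (Htp HE).
- move=> t p; rewrite ent1E preceq_EE => Htp; apply/implyP => _.
  by apply: plausibility_subset; rewrite !S_Neg setCS.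
- move=> t p; rewrite !preceq_EE S_Neg S_And setCI -!S_Neg plausibility_setU.
  by case: (leqP (pl (S (Neg p))) (pl (S (Neg t)))) => H;
    [left | right]; apply/implyP => _; rewrite ?geq_max ?leqnn.
- move=> [q [_ Hq]] p Hp.
  case HE: (consistent E); last by case: Hq; apply/preceq_EE; rewrite HE.
  have S_NegTop : S (Neg (@Top V)) = set0 by apply/setP => w; rewrite !inE.
  have := Hp Top; rewrite preceq_EE HE S_NegTop plausibility_set0 leqn0.
  by rewrite validE plausibility_eq0.
Qed.

End Plausibility.

Section Rank.
Variable V : finType.
Implicit Types (U : seq {set world V}) (f : form V).

Lemma rank_Some U f i :
  i < size U -> nth set0 U i :&: S f != set0 ->
  (forall j, j < i -> nth set0 U j :&: S f = set0) -> rank U f = Some i.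
Proof.
move=> Hi Hmeet Hbefore; rewrite /rank.
set P := (fun A => _).
have HP : forall j, P (nth set0 U j) = (nth set0 U j :&: S f != set0).
  by move=> j; rewrite /P setI_neq0E.
have Hhas : has P U by apply/(has_nthP set0); exists i; rewrite ?HP.
rewrite Hhas; congr Some.
case: (ltngtP (find P U) i) => // Hfi.
- by have := nth_find set0 Hhas; rewrite HP Hbefore ?eqxx.
- by have := before_find set0 Hfi; rewrite HP Hmeet.
Qed.

Lemma rank_None U f : (forall A, A \in U -> A :&: S f = set0) -> rank U f = None.
Proof.
move=> H; rewrite /rank; case: hasP => // [[A HA]].
by rewrite -setI_neq0E H ?eqxx.
Qed.

End Rank.

Section SequenceUE.
Variables (V : finType) (E : {fset form V}).
Implicit Types (f g t p : form V) (w : world V).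
Local Notation pl := (plausibility E).
Local Notation k := #|` E|.

Lemma nth_UE i : i <= k -> nth set0 (UE E) i = UE_comp E i.
Proof. by move=> ?; rewrite nth_mkseq. Qed.

Lemma in_UE_comp i w :
  (w \in UE_comp E i) = consistent E && (#|` sent E w| == k - i).
Proof. by rewrite /UE_comp; case: (consistent E); rewrite inE. Qed.

Lemma UE_sequence : is_sequence (UE E).
Proof.
move=> i j; rewrite size_mkseq => Hi Hj Hij.
rewrite !nth_UE // -setI_eq0; apply/eqP/setP => w; rewrite !inE !in_UE_comp.
by apply/negP => /andP [/andP [_ /eqP ->] /andP [_ /eqP]]; move: Hij => /eqP; lia.
Qed.

Lemma UE_empty : ~~ consistent E -> is_empty (UE E).
Proof.
move=> HE; rewrite /is_empty bigcup_seq; apply/setP => w; rewrite inE.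
by apply/bigcupP => -[_ /mapP [i _ ->]]; rewrite in_UE_comp (negbTE HE).
Qed.

Lemma UE_full : consistent E -> is_full (UE E).
Proof.
move=> HE; rewrite /is_full bigcup_seq; apply/setP => w; rewrite inE; apply/bigcupP.
exists (UE_comp E (k - #|` sent E w|)); first by apply: map_f; rewrite mem_iota; lia.
by rewrite in_UE_comp HE subKn ?eqxx ?card_sent_le.
Qed.

Lemma rank_UE_inconsistent f : ~~ consistent E -> rank (UE E) f = None.
Proof.
move=> HE; apply: rank_None => _ /mapP [i _ ->].
by apply/setP => w; rewrite !inE in_UE_comp (negbTE HE).
Qed.

Lemma rank_UE f : consistent E ->
  rank (UE E) f = if pl (S f) is n.+1 then Some (k - n) else None.
Proof.
move=> HE; case Hf: (pl (S f)) => [|n].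
  apply: rank_None => A _; move/eqP: Hf; rewrite plausibility_eq0 => /eqP ->.
  exact: setI0.
have [w Hwf Hw] := plausibility_witness Hf.
have Hn : n <= k by rewrite -Hw card_sent_le.
apply: rank_Some; first by rewrite size_mkseq; lia.
  apply/set0Pn; exists w; rewrite inE Hwf nth_UE ?leq_subr // in_UE_comp HE Hw.
  by apply/eqP; lia.
move=> j Hj; apply/setP => w'; rewrite in_setI in_set0 nth_UE; last lia.
rewrite in_UE_comp HE /=; apply/negP => /andP [/eqP Hw' /(plausibility_gt E)].
by rewrite Hf Hw' ltnS leq_subCl leqNgt Hj.
Qed.

Lemma rank_lt_UE f g : consistent E ->
  rank_lt (rank (UE E) f) (rank (UE E) g) = (pl (S g) < pl (S f)).
Proof.
move=> HE; rewrite !rank_UE //.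
have := plausibility_le E (S f); have := plausibility_le E (S g).
by case: (pl (S f)) => [|n]; case: (pl (S g)) => [|m] //= *; lia.
Qed.

Lemma rank_UE_eq_None f : consistent E -> rank (UE E) f = None <-> pl (S f) = 0.
Proof. by move=> HE; rewrite rank_UE //; case: (pl (S f)). Qed.

Lemma nmsim_UE f g : consistent E ->
  nmsim (UE E) f g <-> pl (S (And f (Neg g))) < pl (S f) \/ pl (S f) = 0.
Proof. by move=> HE; rewrite /nmsim rank_lt_UE // rank_UE_eq_None. Qed.

Lemma preceq_UE t p :
  preceq_U (UE E) t p <-> (consistent E ==> (pl (S (Neg p)) <= pl (S (Neg t)))).
Proof.
case HE: (consistent E) => /=; last first.
  by split => // _; right; right; rewrite rank_UE_inconsistent ?HE.
rewrite /preceq_U !nmsim_UE // S_Or plausibility_setU.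
have -> : S (And (Or (Neg t) (Neg p)) (Neg t)) = S (Neg t) by rewrite S_And S_Or setUK.
have -> : S (And (Neg p) (Neg Bot)) = S (Neg p) by apply/setP => w; rewrite !inE /= andbT.
set a := pl (S (Neg t)); set b := pl (S (Neg p)).
rewrite ltnn; have [le_ba | lt_ab] := leqP b a.
- rewrite ltnn; split => // _.
  by case: (posnP b) => [-> | b_gt0]; [right; right | left; case => // a0; lia].
- split => // -[H | [// | b0]].
    by case: H; left.
  by rewrite b0 in lt_ab.
Qed.

End SequenceUE.

Theorem proposition8 (V : finType) (E : {fset form V}) :
  (ent E Bot -> is_empty (UE E)) /\
  (~~ ent E Bot -> is_full (UE E)) /\
  Upsilon (UE E) /\
  (forall t p : form V, preceq_E E t p <-> preceq_U (UE E) t p) /\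
  E_relation (preceq_E E).
Proof.
have empty_UE : ent E Bot -> is_empty (UE E) by move=> HE; apply: UE_empty; rewrite negbK.
have full_UE : ~~ ent E Bot -> is_full (UE E) := @UE_full V E.
do 2 (split=> //); split.
  by split; [exact: UE_sequence | case: (boolP (ent E Bot)); auto].
split; last exact: E_relation_preceq_E.
by move=> t p; rewrite preceq_EE preceq_UE.
Qed.
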